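(* Let $G$ be an $L$-bialgebra over $k$ with coproducts $\Delta,\tilde\Delta$. Equip $G\otimes G$ with the $G$-bimodule structure $a\cdot u=\Delta(a)u$, $u\cdot a=u\tilde\Delta(a)$, let $d=\Delta-\tilde\Delta$, and define $[x,y]_G=\Delta(x)\tilde\Delta(y)-\Delta(y)\tilde\Delta(x)\in G\otimes G$. Then for all $x,y,a,b\in G$: $[\cdot,\cdot]_G$ is bilinear; $[x,x]_G=0$; $[x,ya]_G=[x,y]_G\cdot a+y\cdot[x,a]_G-y\cdot(dx)\cdot a$; and $[xb,y]_G=[x,y]_G\cdot b+x\cdot[b,y]_G+x\cdot(dy)\cdot b$.
   Context: $k=\mathbb{R}$ or $\mathbb{C}$. An $L$-bialgebra is a unital associative algebra $G$ with linear maps $\Delta,\tilde\Delta:G\to G\otimes G$ that are unital algebra homomorphisms and satisfy $(\tilde{\Delta}\otimes id)\Delta=(id\otimes\Delta)\tilde{\Delta}$. Products in $G\otimes G$ are those of the tensor product algebra. *)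

From HB Require Import structures.
From mathcomp Require Import all_boot all_order all_algebra.
From mathcomp Require Import Rstruct complex.
From Stdlib Require Import Reals.
Set Implicit Arguments. Unset Strict Implicit. Unset Printing Implicit Defensive.
Import Order.TTheory GRing.Theory Num.Theory.
Local Open Scope ring_scope.

Definition lin (k : fieldType) (U W : lmodType k) (g : U -> W) : Prop :=
  forall (a : k) u1 u2, g (a *: u1 + u2) = a *: g u1 + g u2.

Definition bilin (k : fieldType) (U V W : lmodType k) (f : U -> V -> W) : Prop :=
  (forall (a : k) u1 u2 v, f (a *: u1 + u2) v = a *: f u1 v + f u2 v) /\
  (forall (a : k) u v1 v2, f u (a *: v1 + v2) = a *: f u v1 + f u v2).

Definition is_tensor (k : fieldType) (U V W : lmodType k) (t : U -> V -> W) : Prop :=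
  bilin t /\
  forall (X : lmodType k) (f : U -> V -> X), bilin f ->
    exists g : W -> X,
      [/\ lin g, (forall u v, g (t u v) = f u v) &
          forall h : W -> X, lin h -> (forall u v, h (t u v) = f u v) ->
            forall w, h w = g w].

Definition is_tensor_alg (k : fieldType) (G T : algType k) (t : G -> G -> T) : Prop :=
  [/\ is_tensor t, t 1 1 = 1 &
      forall a b c d, t a b * t c d = t (a * c) (b * d)].

Definition alg_hom (k : fieldType) (G T : algType k) (D : G -> T) : Prop :=
  [/\ lin D, D 1 = 1 & forall a b, D (a * b) = D a * D b].

(* Coassociativity-type axiom (Dt (x) id) D = (id (x) D) Dt, computed in
   T3 = (G (x) G) (x) G, where G (x) (G (x) G) is identified with T3 through
   the associator a (x) (b (x) c) |-> (a (x) b) (x) c (encoded by A).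
   h1 = Dt (x) id, h2 = (associator) o (id (x) D); these maps are the unique
   linear maps with the stated values on pure tensors. *)
Definition coassoc (k : fieldType) (G T : algType k) (T3 : lmodType k)
  (t : G -> G -> T) (t3 : T -> G -> T3) (D Dt : G -> T) : Prop :=
  forall (h1 h2 : T -> T3) (A : G -> T -> T3),
    lin h1 -> lin h2 -> bilin A ->
    (forall a b c, A a (t b c) = t3 (t a b) c) ->
    (forall a b, h1 (t a b) = t3 (Dt a) b) ->
    (forall a b, h2 (t a b) = A a (D b)) ->
    forall x, h1 (D x) = h2 (Dt x).

Definition L_bialgebra (k : fieldType) (G T : algType k) (T3 : lmodType k)
  (t : G -> G -> T) (t3 : T -> G -> T3) (D Dt : G -> T) : Prop :=
  [/\ is_tensor_alg t, is_tensor t3, alg_hom D, alg_hom Dt &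
      coassoc t t3 D Dt].

Definition lact (k : fieldType) (G T : algType k) (D : G -> T) (a : G) (u : T) : T :=
  D a * u.
Definition ract (k : fieldType) (G T : algType k) (Dt : G -> T) (u : T) (a : G) : T :=
  u * Dt a.

Definition dcob (k : fieldType) (G T : algType k) (D Dt : G -> T) (x : G) : T :=
  D x - Dt x.

Definition Lbr (k : fieldType) (G T : algType k) (D Dt : G -> T) (x y : G) : T :=
  D x * Dt y - D y * Dt x.

Definition Thm13 (k : fieldType) : Prop :=
  forall (G T : algType k) (T3 : lmodType k)
         (t : G -> G -> T) (t3 : T -> G -> T3) (D Dt : G -> T),
    L_bialgebra t t3 D Dt ->
    let br := Lbr D Dt in
    let la := lact D in
    let ra := ract Dt in
    let d := dcob D Dt in
    [/\ bilin br,
        (forall x, br x x = 0),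
        (forall x y a, br x (y * a) =
             ra (br x y) a + la y (br x a) - ra (la y (d x)) a) &
        (forall x y b, br (x * b) y =
             ra (br x y) b + la x (br b y) + ra (la x (d y)) b)].

From mathcomp Require Import all_boot all_order all_algebra.
From mathcomp Require Import Rstruct complex.
From Stdlib Require Import Reals.
Import GRing.Theory.
Local Open Scope ring_scope.

(* Bilinearity and [x, x] = 0 are immediate,
   and once Delta(ya) = Delta(y) Delta(a) (resp. for Delta~) is multiplied
   out, each Leibniz rule is an identity in the ring G (x) G whose right-hand
   side telescopes. *)

Lemma subr_telescope (M : zmodType) (a b c d : M) :
  a - b = (a - c) + (d - b) + (c - d).
Proof. by rewrite addrAC !addrA !subrK. Qed.

Section LBracket.

Variables (k : fieldType) (G T : algType k) (D Dt : G -> T).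

Local Notation br := (Lbr D Dt).

Lemma LbrC x y : br y x = - br x y.
Proof. by rewrite /Lbr opprB. Qed.

Lemma Lbrxx x : br x x = 0.
Proof. exact: subrr. Qed.

Section Bilinear.

Hypotheses (linD : lin D) (linDt : lin Dt).

Lemma Lbr_linl y : lin (br^~ y).
Proof.
move=> a x1 x2; rewrite /Lbr linD linDt mulrDl mulrDr -scalerAl -scalerAr.
by rewrite scalerBr opprD addrACA.
Qed.

Lemma Lbr_bilin : bilin br.
Proof.
split=> [a x1 x2 y | a x y1 y2]; first exact: Lbr_linl.
by rewrite !(LbrC _ x) Lbr_linl opprD scalerN.
Qed.

End Bilinear.

Section Leibniz.

Hypotheses (mulD : {morph D : a b / a * b}) (mulDt : {morph Dt : a b / a * b}).

Lemma Lbr_mulr x y a :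
  br x (y * a) = ract Dt (br x y) a + lact D y (br x a)
                 - ract Dt (lact D y (dcob D Dt x)) a.
Proof.
rewrite /Lbr /ract /lact /dcob mulD mulDt.
rewrite !mulrBl !mulrBr !mulrBl !mulrA opprB.
by apply: subr_telescope.
Qed.

Lemma Lbr_mull x y b :
  br (x * b) y = ract Dt (br x y) b + lact D x (br b y)
                 + ract Dt (lact D x (dcob D Dt y)) b.
Proof.
rewrite /Lbr /ract /lact /dcob mulD mulDt.
rewrite !mulrBl !mulrBr !mulrBl !mulrA.
by rewrite [X in _ = X + _]addrC; apply: subr_telescope.
Qed.

End Leibniz.

End LBracket.

Lemma Thm13_fieldType (k : fieldType) : Thm13 k.
Proof.
move=> G T T3 t t3 D Dt [_ _ [linD _ mulD] [linDt _ mulDt] _] /=.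
split; [exact: Lbr_bilin | exact: Lbrxx | exact: Lbr_mulr | exact: Lbr_mull].
Qed.

Theorem mainTheorem13 : Thm13 R /\ Thm13 (complex R).
Proof. split; exact: Thm13_fieldType. Qed.
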